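(* Assume all deadlines are positive integers. For every $\bar d\in\mathcal D$ and every integer $q$ with $1\le q\le\lfloor \bar d/2\rfloor$, define $\mathcal K_1(\bar d,q)=\{k\in\mathcal K(\bar d): t_k>\bar d-q\}$ and $\mathcal K_2(\bar d,q)=\{k\in\mathcal K(\bar d): q\le t_k\le\bar d-q\}$. Then for every feasible solution $(\rho_{kp})$ of $B(\mathcal K)$, the vector $\rho_k=\sum_{p\in\mathcal P}\rho_{kp}$ satisfies $$\sum_{k\in\mathcal K_1(\bar d,q)}\bar d\,\rho_k+\sum_{k\in\mathcal K_2(\bar d,q)}t_k\,\rho_k\le \bar d\,|\mathcal P|.$$
   Context: Let $\mathcal O$ be a finite set of orders, each order $o\in\mathcal O$ having a deadline $\bar d_o>0$; let $\mathcal D=\{\bar d_o: o\in\mathcal O\}$ be the set of distinct deadlines and let $\mathcal P$ be a finite nonempty set of pickers. Let $\mathcal K$ be a finite set of routes; each route $k\in\mathcal K$ has a nonempty batch of orders $\mathcal O_k\subseteq\mathcal O$ and a duration $t_k>0$, and its deadline is $\bar d_k=\min_{o\in\mathcal O_k}\bar d_o$. Write $\mathcal K(o)=\{k\in\mathcal K: o\in\mathcal O_k\}$ and $\mathcal K(\bar d)=\{k\in\mathcal K:\bar d_k\le\bar d\}$. Formulation $B(\mathcal K)$: binary variables $\rho_{kp}\in\{0,1\}$ ($k\in\mathcal K,p\in\mathcal P$); minimize $\sum_{k\in\mathcal K}t_k\sum_{p\in\mathcal P}\rho_{kp}$ subject to $\sum_{k\in\mathcal K(o)}\sum_{p\in\mathcal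 P}\rho_{kp}\ge 1$ for all $o\in\mathcal O$, and $\sum_{k\in\mathcal K(\bar d)}t_k\rho_{kp}\le\bar d$ for all $\bar d\in\mathcal D$, $p\in\mathcal P$. *)

From mathcomp Require Import all_boot all_order all_algebra.
Set Implicit Arguments. Unset Strict Implicit. Unset Printing Implicit Defensive.
Import Order.TTheory GRing.Theory Num.Theory.
Local Open Scope ring_scope.

Section Defs.
Variables (R : realFieldType) (O K P : finType).
Variables (d : O -> nat) (Ok : K -> {set O}) (t : K -> R).

(* deadline of a route: min over its (nonempty) batch; the big-op identity
   (max of all deadlines) is irrelevant when the batch is nonempty *)
Definition route_deadline (k : K) : nat :=
  \big[minn/ (\max_(o : O) d o)%N]_(o in Ok k) d o.

Definition in_deadlines (dbar : nat) : Prop := exists o : O, d o = dbar.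

Definition inKd (dbar : nat) (k : K) : bool := (route_deadline k <= dbar)%N.

Definition feasibleB (rho : K -> P -> bool) : Prop :=
  (forall o : O, (1 <= \sum_(k : K | o \in Ok k) \sum_(p : P) (rho k p : nat))%N) /\
  (forall dbar : nat, in_deadlines dbar -> forall p : P,
      \sum_(k : K | inKd dbar k) t k * (rho k p : nat)%:R <= dbar%:R).

Definition rho_agg (rho : K -> P -> bool) (k : K) : R :=
  \sum_(p : P) (rho k p : nat)%:R.
End Defs.
Arguments rho_agg R {K P} rho k.

From mathcomp Require Import all_boot all_order all_algebra.
From mathcomp Require Import zify lra.
Import Order.TTheory GRing.Theory Num.Theory.
Local Open Scope ring_scope.

(* The inequality is a sum over pickers of a single-picker statement.
   Fix a picker, a deadline D and 2q <= D; let the picker perform a set of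
   routes of K(D) whose total duration is at most D.  Call a route long if
   t > D - q and medium if q <= t <= D - q.  If the picker performs a long
   route, any other performed route has t <= D - t_long < q, so it is neither
   long nor medium, and the picker contributes exactly D.  Otherwise it
   contributes the total duration of its medium routes, at most D. *)

Lemma sum_indicator (R : pzSemiRingType) (I : finType) (A b : pred I)
    (F : I -> R) :
  \sum_(i | A i) F i * (b i : nat)%:R = \sum_(i | A i && b i) F i.
Proof.
by rewrite big_mkcondr; apply: eq_bigr => i _; case: (b i); rewrite ?mulr1 ?mulr0.
Qed.

Lemma ler_sum_subpred (R : numDomainType) (I : finType) (A B : pred I)
    (F : I -> R) :
  (forall i, A i -> B i) -> (forall i, B i -> 0 <= F i) ->
  \sum_(i | A i) F i <= \sum_(i | B i) F i.
Proof.
move=> sAB F_ge0; rewrite [X in _ <= X](bigID A) /=.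
have -> : \sum_(i | B i && A i) F i = \sum_(i | A i) F i.
  by apply: eq_bigl => i; case Ai: (A i); rewrite ?andbT ?andbF // sAB.
by rewrite lerDl; apply: sumr_ge0 => i /andP[/F_ge0].
Qed.

Section SinglePicker.
Variables (R : realFieldType) (K : finType) (t : K -> R) (D q : R).
(* [S]: the routes of K(D); [x]: the routes the picker performs. *)
Variables (S x : pred K).
Hypothesis t_ge0 : forall k, 0 <= t k.
Hypothesis load_le : \sum_(k | S k && x k) t k <= D.
Hypothesis q_half : q *+ 2 <= D.

Definition long_route (k : K) : bool := S k && (D - q < t k).
Definition medium_route (k : K) : bool := S k && (q <= t k <= D - q).

Lemma long_not_medium k : long_route k -> ~~ medium_route k.
Proof. by case/andP=> _ tk; apply/negP => /andP[_ /andP[_]]; rewrite leNgt tk. Qed.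

Lemma pair_load_le k1 k2 : k1 != k2 -> S k1 && x k1 -> S k2 && x k2 ->
  t k1 + t k2 <= D.
Proof.
move=> k12 xk1 xk2; apply: le_trans load_le.
rewrite (bigD1 k1) //= (bigD1 k2) /=; last by rewrite xk2 eq_sym.
by rewrite addrA lerDl; apply: sumr_ge0 => k _.
Qed.

Lemma long_route_alone k1 k : long_route k1 -> x k1 -> k != k1 -> x k ->
  ~~ long_route k && ~~ medium_route k.
Proof.
move=> /andP[Sk1 tk1] xk1 kk1 xk; rewrite /long_route /medium_route.
case Sk: (S k) => //=.
have hpair : t k + t k1 <= D by apply: pair_load_le; rewrite ?Sk ?Sk1 ?xk ?xk1.
have tk_small : t k < q by lra.
have qq : q + q <= D by rewrite -mulr2n.
apply/andP; split; first by rewrite -leNgt; lra.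
by rewrite negb_and -ltNge tk_small.
Qed.

Lemma picker_bound :
  \sum_(k | long_route k && x k) D + \sum_(k | medium_route k && x k) t k <= D.
Proof.
case: (pickP (fun k => long_route k && x k)) => [k1 /andP[lk1 xk1] | no_long].
  have other k : k != k1 -> x k -> ~~ long_route k && ~~ medium_route k.
    exact: long_route_alone.
  rewrite (bigD1 k1) /= ?lk1 // big1 ?addr0; last first.
    move=> k /andP[/andP[lk xk] kk1].
    by have /andP[] := other k kk1 xk; rewrite lk.
  rewrite big1 ?addr0 // => k /andP[mk xk].
  have [kk1 | kk1] := eqVneq k k1.
    by move: mk; rewrite kk1 (negbTE (long_not_medium _ lk1)).
  by have /andP[_] := other k kk1 xk; rewrite mk.
rewrite big_pred0 ?add0r //; apply: le_trans load_le.
by apply: ler_sum_subpred => [k /andP[/andP[-> _] ->] | k _].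
Qed.

End SinglePicker.

Theorem proposition4 (R : realFieldType) (O K P : finType)
  (d : O -> nat) (Ok : K -> {set O}) (t : K -> R)
  (hd : forall o, (0 < d o)%N)
  (hOk : forall k, Ok k != set0)
  (ht : forall k, 0 < t k)
  (hP : (0 < #|P|)%N)
  (rho : K -> P -> bool)
  (hfeas : feasibleB d Ok t rho)
  (dbar : nat) (hdbar : in_deadlines d dbar)
  (q : nat) (hq1 : (1 <= q)%N) (hq2 : (q <= dbar %/ 2)%N) :
  \sum_(k : K | inKd d Ok dbar k && (dbar%:R - q%:R < t k))
      dbar%:R * rho_agg R rho k
  + \sum_(k : K | inKd d Ok dbar k && (q%:R <= t k <= dbar%:R - q%:R))
      t k * rho_agg R rho k
  <= dbar%:R * #|P|%:R.
Proof.
have q_half : (q%:R : R) *+ 2 <= dbar%:R.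
  by rewrite -mulrnA ler_nat; have := leq_divM dbar 2; lia.
have t_ge0 k : 0 <= t k by apply: ltW.
rewrite /rho_agg.
under eq_bigr do rewrite mulr_sumr.
under [X in _ + X <= _]eq_bigr do rewrite mulr_sumr.
rewrite !(exchange_big _ _ _ (fun k => inKd d Ok dbar k && _)) -big_split /=.
rewrite mulr_natr -sumr_const; apply: ler_sum => p _.
rewrite !sum_indicator.
have load_le : \sum_(k | inKd d Ok dbar k && rho k p) t k <= dbar%:R.
  by case: hfeas => _ /(_ dbar hdbar p); rewrite sum_indicator.
exact: (@picker_bound R K t _ _ (inKd d Ok dbar) (rho^~ p) t_ge0 load_le q_half).
Qed.
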